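(* There is an absolute constant $c>0$ such that for every max game $\mathcal R$ on a graph with $n\ge2$ nodes, the price of anarchy satisfies $PoA\le c\,(L+\log n)$; that is, $PoA=O(L+\log n)$.
   Context: A routing game $(\mathbf N,G,\mathcal P)$: players $\{1,\dots,N\}$ ($N\ge1$), a simple graph $G$ with $n$ nodes, and for each player $i$ a nonempty finite set $\mathcal P_i$ of paths from $u_i$ to $v_i$; $L=\max_{p\in\bigcup_i\mathcal P_i}|p|$ (path length = number of edges). A routing is $\mathbf p=[p_1,\dots,p_N]$, $p_i\in\mathcal P_i$. $C_e(\mathbf p)$ = number of players whose path uses edge $e$; $C_i(\mathbf p)=\max_{e\in p_i}C_e(\mathbf p)$; $D_i(\mathbf p)=|p_i|$; $C(\mathbf p)=\max_eC_e(\mathbf p)$; $D(\mathbf p)=\max_i|p_i|$. Max game: player cost $pc_i=\max(C_i,D_i)$, social cost $SC=\max(C,D)$. A Nash-routing is one where no player can strictly lower $pc_i$ by unilaterally changing its path within $\mathcal P_i$. With $SC^*$ the minimum social cost over all routings and $\mathbf P$ the (nonempty) set of Nash-routings, $PoA=\sup_{\mathbf p\in\mathbf P}SC(\mathbf p)/SC^*$. *)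

From mathcomp Require Import all_boot.
Set Implicit Arguments. Unset Strict Implicit. Unset Printing Implicit Defensive.

Definition simple_graph (n : nat) (adj : rel 'I_n) : Prop :=
  (forall x y, adj x y = adj y x) /\ (forall x, ~~ adj x x).

(* A path is given by its start node and the sequence of following nodes.
   Its length is the number of edges, i.e. the size of the sequence. *)
Definition gpath (n : nat) : Type := ('I_n * seq 'I_n)%type.

Definition gpath_len n (p : gpath n) : nat := size p.2.
Definition gpath_start n (p : gpath n) : 'I_n := p.1.
Definition gpath_end n (p : gpath n) : 'I_n := last p.1 p.2.

Definition gpath_steps n (p : gpath n) : seq ('I_n * 'I_n) := zip (p.1 :: p.2) p.2.

Definition is_path_from_to n (adj : rel 'I_n) (u v : 'I_n) (p : gpath n) : bool :=
  [&& path adj p.1 p.2, uniq (p.1 :: p.2), gpath_start p == u & gpath_end p == v].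

Definition uses_edge n (p : gpath n) (e : 'I_n * 'I_n) : bool :=
  has (fun st => (st == e) || (st == (e.2, e.1))) (gpath_steps p).

Section Game.
Variables (n N : nat).

Definition routing := 'I_N -> gpath n.

Definition cong_edge (r : routing) (e : 'I_n * 'I_n) : nat :=
  #|[set i : 'I_N | uses_edge (r i) e]|.

Definition cong_player (r : routing) (i : 'I_N) : nat :=
  \max_(e <- gpath_steps (r i)) cong_edge r e.

Definition dil_player (r : routing) (i : 'I_N) : nat := gpath_len (r i).

Definition player_cost (r : routing) (i : 'I_N) : nat :=
  maxn (cong_player r i) (dil_player r i).

Definition congestion (adj : rel 'I_n) (r : routing) : nat :=
  \max_(e : 'I_n * 'I_n | adj e.1 e.2) cong_edge r e.
Definition dilation (r : routing) : nat := \max_(i : 'I_N) dil_player r i.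

Definition social_cost (adj : rel 'I_n) (r : routing) : nat :=
  maxn (congestion adj r) (dilation r).

Definition valid_routing (P : 'I_N -> seq (gpath n)) (r : routing) : Prop :=
  forall i, r i \in P i.

Definition update (r : routing) (i : 'I_N) (q : gpath n) : routing :=
  fun j => if j == i then q else r j.

Definition nash_routing (P : 'I_N -> seq (gpath n)) (r : routing) : Prop :=
  valid_routing P r /\
  forall i q, q \in P i -> (player_cost r i <= player_cost (update r i q) i)%N.

Definition max_path_len (P : 'I_N -> seq (gpath n)) : nat :=
  \max_(i : 'I_N) \max_(p <- P i) gpath_len p.

Definition routing_game (adj : rel 'I_n) (u v : 'I_N -> 'I_n)
    (P : 'I_N -> seq (gpath n)) : Prop :=
  simple_graph adj /\ (1 <= N)%N /\
  forall i, P i != [::] /\ all (is_path_from_to adj (u i) (v i)) (P i).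

End Game.

From Stdlib Require Import Reals Lra Psatz.
From mathcomp Require Import all_boot.
Set Implicit Arguments. Unset Strict Implicit. Unset Printing Implicit Defensive.

(* Fix a Nash routing r and an arbitrary routing r' with congestion K.
   Call an (oriented) edge t-heavy if at least t players of r cross it,
   and let A_t be the set of t-heavy edges.
   - Counting: the congestion carried by A_t is at least t |A_t|, and each
     player crossing A_t contributes at most 2L (oriented) edges, so
     t |A_t| <= 2L |{players crossing A_t}|.
   - Nash: for t > L a player crossing A_t has cost >= t; moving to its
     r'-path would raise congestion by at most one and the new path has
     length <= L < t, so its r'-path crosses A_(t-1).  Hence at most
     K |A_(t-1)| players cross A_t.
   Together, t |A_t| <= 2LK |A_(t-1)|, so the number of heavy edges at
   least halves at each level above T = max(L, 4LK).  Since A_C is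
   nonempty for the congestion C of r and |A_T| <= n^2, we get
   2^(C - T) <= n^2, i.e. C <= T + 4 ln n, whence the bound (when
   SC(r') = 0 all admissible paths are trivial and SC(r) = 0). *)

Lemma card_set_sum (T : finType) (b : pred T) : #|[set i | b i]| = \sum_i (b i : nat).
Proof.
rewrite -sum1_card big_mkcond /=; apply: eq_bigr => i _; rewrite inE; by case: (b i).
Qed.

Lemma double_count (I E : finType) (S : {set E}) (R : I -> E -> bool) :
  \sum_(e in S) #|[set i | R i e]| = \sum_i #|[set e in S | R i e]|.
Proof.
under eq_bigr => e _ do rewrite card_set_sum.
rewrite exchange_big /=; apply: eq_bigr => i _.
rewrite card_set_sum big_mkcond /=; apply: eq_bigr => e _; by case: (e \in S).
Qed.

Lemma union_bound (I E : finType) (S : {set E}) (R : I -> E -> bool) :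
  #|[set i | [exists e in S, R i e]]| <= \sum_(e in S) #|[set i | R i e]|.
Proof.
rewrite double_count card_set_sum; apply: leq_sum => i _.
case: (boolP [exists e in S, R i e]) => // /existsP [e /andP [eS Re]].
rewrite card_gt0; apply/set0Pn; exists e; by rewrite inE eS Re.
Qed.

Lemma path_steps_rel (T : eqType) (e : rel T) x s : path e x s ->
  forall st, st \in zip (x :: s) s -> e st.1 st.2.
Proof.
elim: s x => [|y s IH] x //= /andP [exy ps] st.
rewrite in_cons => /orP [/eqP -> //| ]; exact: IH.
Qed.

Lemma size_steps n (p : gpath n) : size (gpath_steps p) = gpath_len p.
Proof. rewrite /gpath_steps size_zip /gpath_len /=; apply/minn_idPr; exact: leqnSn. Qed.

Definition flip_edge n (e : 'I_n * 'I_n) : 'I_n * 'I_n := (e.2, e.1).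

Lemma uses_edge_flip n (p : gpath n) e : uses_edge p (flip_edge e) = uses_edge p e.
Proof. rewrite /uses_edge /flip_edge /=; apply: eq_has => st; rewrite orbC; by case: e. Qed.

Lemma uses_edgeP n (p : gpath n) e : uses_edge p e ->
  exists2 st, st \in gpath_steps p & e = st \/ e = flip_edge st.
Proof.
move/hasP => [st sin /orP [/eqP E|/eqP E]]; exists st => //; [by left | right].
by rewrite E /flip_edge; case: e {E}.
Qed.

Lemma card_used_edges n (p : gpath n) (S : {set 'I_n * 'I_n}) :
  #|[set e in S | uses_edge p e]| <= 2 * gpath_len p.
Proof.
set steps := gpath_steps p ++ map (@flip_edge n) (gpath_steps p).
apply: (@leq_trans #|[pred e | e \in steps]|); last first.
  apply: leq_trans (card_size _) _.
  by rewrite size_cat size_map size_steps mul2n addnn.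
apply: subset_leq_card; apply/subsetP => e; rewrite inE => /andP [_].
case/uses_edgeP => st sin [->|->]; by rewrite !inE mem_cat ?sin ?map_f ?orbT.
Qed.

Lemma cong_edge_flip n N (r : routing n N) e : cong_edge r (flip_edge e) = cong_edge r e.
Proof. apply: eq_card => i; by rewrite !inE uses_edge_flip. Qed.

Lemma cong_edge_update n N (r : routing n N) i q e :
  cong_edge (update r i q) e <= (cong_edge r e).+1.
Proof.
rewrite /cong_edge; apply: (@leq_trans #|i |: [set j | uses_edge (r j) e]|).
  apply: subset_leq_card; apply/subsetP => j; rewrite !inE /update.
  by case: (j =P i) => [->|_] /=; rewrite ?eqxx // => ->; rewrite orbT.
by rewrite cardsU1; case: (i \notin _).
Qed.

Lemma cong_edge_le_player n N (r : routing n N) i e :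
  uses_edge (r i) e -> cong_edge r e <= cong_player r i.
Proof.
case/uses_edgeP => st sin [->|->]; rewrite ?cong_edge_flip;
exact: (@leq_bigmax_seq ('I_n * 'I_n)%type _ predT (cong_edge r) _ sin).
Qed.

Section NashRouting.
Variables (n N : nat) (adj : rel 'I_n) (u v : 'I_N -> 'I_n) (P : 'I_N -> seq (gpath n)).
Variables (r r' : routing n N).
Hypothesis game : routing_game adj u v P.
Hypothesis r_nash : nash_routing P r.
Hypothesis r'_valid : valid_routing P r'.

Let L := max_path_len P.
Let K := congestion adj r'.
Let C := congestion adj r.

Lemma path_len_le i p : p \in P i -> gpath_len p <= L.
Proof.
move=> pin; apply: (leq_trans _ (leq_bigmax i)).
exact: (@leq_bigmax_seq ('I_n * seq 'I_n)%type (P i) predT (@gpath_len n) p pin).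
Qed.

Lemma dilation_le : dilation r <= L.
Proof. apply/bigmax_leqP => i _; exact: path_len_le (proj1 r_nash i). Qed.

Lemma admissible_steps_adj i p st : p \in P i -> st \in gpath_steps p -> adj st.1 st.2.
Proof.
have [_ [_ HP]] := game; move=> pin; have := allP (proj2 (HP i)) _ pin.
case/and4P => pa _ _ _; exact: path_steps_rel pa st.
Qed.

Definition heavy_edges t := [set e : 'I_n * 'I_n | adj e.1 e.2 && (t <= cong_edge r e)].
Definition heavy_users t := [set i : 'I_N | [exists e in heavy_edges t, uses_edge (r i) e]].

Lemma heavy_edges_top : 0 < C -> 0 < #|heavy_edges C|.
Proof.
move=> Cp; rewrite card_gt0; apply/set0Pn.
case: (boolP [exists e : 'I_n * 'I_n, adj e.1 e.2 && (C <= cong_edge r e)]).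
  by move/existsP => [e he]; exists e; rewrite inE.
move/negP => none; have : C <= C.-1; last by case: (C) Cp => // c _; rewrite ltnn.
rewrite {1}/C /congestion; apply/bigmax_leqP => e ae.
rewrite -ltnS prednK // ltnNge; apply/negP => ge; apply: none.
by apply/existsP; exists e; rewrite ae ge.
Qed.

Lemma heavy_edges_count t : t * #|heavy_edges t| <= 2 * L * #|heavy_users t|.
Proof.
apply: (@leq_trans (\sum_(e in heavy_edges t) cong_edge r e)).
  rewrite mulnC -sum_nat_const; apply: leq_sum => e; rewrite inE => /andP [_ ->] //.
rewrite /cong_edge double_count.
apply: (@leq_trans (\sum_i (if i \in heavy_users t then 2 * L else 0))).
  apply: leq_sum => i _; case: ifP => iheavy.
    apply: (leq_trans (card_used_edges _ _)); rewrite leq_mul2l /=.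
    exact: path_len_le (proj1 r_nash i).
  rewrite leqn0 cards_eq0; apply/eqP/setP => e; rewrite !inE.
  apply/negP => /andP [eA eu]; move/negbT: iheavy; rewrite inE => /negP; apply.
  by apply/existsP; exists e; rewrite inE eA.
by rewrite -big_mkcond sum_nat_const mulnC.
Qed.

Lemma deviation_cost_lt i q t : gpath_len q < t ->
  (forall st, st \in gpath_steps q -> (cong_edge r st).+1 < t) ->
  player_cost (update r i q) i < t.
Proof.
move=> short light; rewrite /player_cost /cong_player /dil_player /update eqxx.
rewrite gtn_max short andbT; case: t short light => // t _ light.
apply/bigmax_leqP_seq => st sin _; exact: leq_trans (cong_edge_update _ _ _ _) (light _ sin).
Qed.

Lemma heavy_user_deviation t i : L < t -> i \in heavy_users t ->
  [exists e in heavy_edges t.-1, uses_edge (r' i) e].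
Proof.
move=> Lt; rewrite inE => /existsP [e0 /andP [e0heavy e0used]].
case: existsP => // avoid; exfalso.
have cost_ge : t <= player_cost r i.
  move: e0heavy; rewrite inE => /andP [_ /leq_trans]; apply.
  exact: leq_trans (cong_edge_le_player e0used) (leq_maxl _ _).
have := leq_trans cost_ge (proj2 r_nash i (r' i) (r'_valid i)); rewrite leqNgt.
apply/negP/negPn/deviation_cost_lt => [|st sin].
  exact: leq_ltn_trans (path_len_le (r'_valid i)) Lt.
rewrite ltnNge; apply/negP => ge; apply: avoid; exists st.
rewrite inE (admissible_steps_adj (r'_valid i) sin) /=.
rewrite -ltnS prednK ?ge; last exact: leq_ltn_trans (leq0n L) Lt.
by apply/hasP; exists st => //; rewrite eqxx.
Qed.

(* Above L, at most K |A_(t-1)| players cross a t-heavy edge, since each of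
   them crosses A_(t-1) in r' and every edge carries at most K of them. *)
Lemma heavy_users_count t : L < t -> #|heavy_users t| <= K * #|heavy_edges t.-1|.
Proof.
move=> Lt.
apply: (@leq_trans #|[set i | [exists e in heavy_edges t.-1, uses_edge (r' i) e]]|).
  apply: subset_leq_card; apply/subsetP => i ip; rewrite inE; exact: heavy_user_deviation.
apply: (leq_trans (union_bound _ _)).
rewrite mulnC -sum_nat_const; apply: leq_sum => e; rewrite inE => /andP [ae _].
exact: (leq_bigmax_cond (P := fun e : 'I_n * 'I_n => adj e.1 e.2) (F := cong_edge r') e ae).
Qed.

Definition threshold := maxn L (4 * L * K).

Lemma heavy_edges_halve t : threshold < t -> 2 * #|heavy_edges t| <= #|heavy_edges t.-1|.
Proof.
rewrite gtn_max => /andP [Lt LKt].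
have key : t * #|heavy_edges t| <= 2 * L * K * #|heavy_edges t.-1|.
  apply: leq_trans (heavy_edges_count t) _.
  by rewrite -[2 * L * K * _]mulnA leq_mul2l heavy_users_count ?orbT.
case: (posnP (L * K)) => [LK0|LKp].
  move: key; rewrite -(mulnA 2 L K) LK0 muln0 mul0n leqn0 muln_eq0.
  by case/orP => /eqP t0; [rewrite t0 in Lt | rewrite t0].
have LKa : 4 * L * K * #|heavy_edges t| <= t * #|heavy_edges t| by rewrite leq_mul2r ltnW ?orbT.
rewrite -(@leq_pmul2l (2 * (L * K))); last by rewrite (muln_gt0 2) LKp.
have -> : 2 * (L * K) * (2 * #|heavy_edges t|) = 4 * L * K * #|heavy_edges t|.
  by rewrite mulnCA !mulnA.
by rewrite mulnA; apply: leq_trans LKa key.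
Qed.


Lemma heavy_edges_decay k : 2 ^ k * #|heavy_edges (threshold + k)| <= #|heavy_edges threshold|.
Proof.
elim: k => [|k IH]; first by rewrite addn0 mul1n.
apply: leq_trans _ IH; rewrite expnSr -mulnA leq_mul2l; apply/orP; right.
rewrite addnS; apply: (heavy_edges_halve (t := (threshold + k).+1)).
by rewrite ltnS leq_addr.
Qed.

Lemma congestion_excess : 0 < n -> 2 ^ (C - threshold) <= n * n.
Proof.
move=> n_pos; case: (leqP C threshold) => [le|gt].
  by move: le; rewrite -subn_eq0 => /eqP ->; rewrite expn0 muln_gt0 n_pos.
have top := heavy_edges_top (leq_ltn_trans (leq0n _) gt).
apply: leq_trans (leq_pmulr _ top) _; rewrite -{2}(subnKC (ltnW gt)).
apply: leq_trans (heavy_edges_decay _) _.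
by apply: leq_trans (max_card _) _; rewrite card_prod card_ord.
Qed.

(* If some admissible routing has dilation 0, every player has u_i = v_i,
   so every simple admissible path has length 0. *)
Lemma max_path_len_zero : dilation r' = 0 -> L = 0.
Proof.
move=> D0; apply/eqP; rewrite -leqn0; apply/bigmax_leqP => i _.
apply/bigmax_leqP_seq => p pin _.
have len0 : gpath_len (r' i) = 0.
  by apply/eqP; rewrite -leqn0 -D0; exact: (leq_bigmax (F := dil_player r') i).
have [_ [_ HP]] := game; have [_ admissible] := HP i.
have := allP admissible _ (r'_valid i); case/and4P => _ _ /eqP s1 /eqP e1.
have := allP admissible _ pin; case/and4P => _ simple /eqP s2 /eqP e2.
move: len0 e1 s1; rewrite /gpath_len /gpath_end /gpath_start.
case: (r' i) => x [|y s] //= _ e1 s1.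
move: simple e2 s2; rewrite /gpath_end /gpath_start; case: p {pin} => x' [|y s] //= simple e2 s2.
move: simple => /andP [/negP []].
by rewrite (_ : x' = last y s) ?mem_last // e2 s2 -e1 s1.
Qed.

Lemma congestion_zero : L = 0 -> C = 0.
Proof.
move=> L0; case: (posnP C) => // Cp; have := heavy_edges_count C.
rewrite L0 muln0 mul0n leqn0 muln_eq0 => /orP [/eqP C0|/eqP A0].
  by rewrite C0 in Cp.
by have := heavy_edges_top Cp; rewrite A0.
Qed.

Lemma nash_cost_bound : 0 < n ->
  exists2 x, 2 ^ x <= n * n & social_cost adj r <= (4 * L + x) * social_cost adj r'.
Proof.
move=> n_pos; exists (C - threshold); first exact: congestion_excess.
case: (posnP (social_cost adj r')) => [S0|S_pos].
  have L0 : L = 0.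
    by apply: max_path_len_zero; apply/eqP; rewrite -leqn0 -S0 leq_maxr.
  rewrite S0 muln0 leqn0 /social_cost -/C congestion_zero // max0n -leqn0 -L0.
  exact: dilation_le.
have T_le : threshold <= 4 * L * social_cost adj r'.
  rewrite geq_max leq_mul2l leq_maxl orbT andbT -mulnA mulnCA leq_pmulr //.
  by rewrite muln_gt0 S_pos.
apply: (@leq_trans (threshold + (C - threshold))).
  rewrite geq_max -leq_subLR leqnn /=.
  exact: leq_trans dilation_le (leq_trans (leq_maxl _ _) (leq_addr _ _)).
by rewrite mulnDl leq_add // leq_pmulr.
Qed.
End NashRouting.

Open Scope R_scope.

(* 2^x <= n^2 means x <= 2 log2 n, which is at most 4 ln n as ln 2 > 1/2. *)
Lemma exponent_le_ln (n x : nat) : (2 ^ x <= n * n)%N -> INR x <= 4 * ln (INR n).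
Proof.
move=> /leP/le_INR; rewrite -multE mult_INR.
have -> : INR (2 ^ x)%N = 2 ^ x.
  by elim: x => // x IH; rewrite expnS -multE mult_INR IH.
move=> pow_le.
have n_pos : 0 < INR n.
  case: (Rle_lt_dec (INR n) 0) => // n0.
  have : 0 < 2 ^ x by apply: pow_lt; lra.
  have := pos_INR n; nra.
have ln_le : ln (2 ^ x) <= ln (INR n * INR n).
  case: (Rle_lt_or_eq_dec _ _ pow_le) => [lt|->]; last lra.
  by left; apply: ln_increasing => //; apply: pow_lt; lra.
rewrite ln_pow ?ln_mult in ln_le; try lra.
have := ln_lt_2; have := pos_INR x; nra.
Qed.

Theorem mainTheorem6 :
  exists c : R, 0 < c /\
  forall (n N : nat) (adj : rel 'I_n) (u v : 'I_N -> 'I_n)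
         (P : 'I_N -> seq (gpath n)),
    is_true (leq 2 n) ->
    routing_game adj u v P ->
    forall r r' : routing n N,
      nash_routing P r ->
      valid_routing P r' ->
      INR (social_cost adj r)
        <= c * (INR (max_path_len P) + ln (INR n)) * INR (social_cost adj r').
Proof.
exists 4; split; first lra.
move=> n N adj u v P n_ge2 game r r' r_nash r'_valid.
have [x pow_le cost_le] := nash_cost_bound game r_nash r'_valid (ltnW n_ge2).
have x_le := exponent_le_ln pow_le.
move/leP/le_INR: cost_le; rewrite mult_INR plus_INR mult_INR => cost_le.
apply: (Rle_trans _ _ _ cost_le); apply: Rmult_le_compat_r; first exact: pos_INR.
rewrite [INR 4]/=; lra.
Qed.
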